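(* Let $s_\beta$ be the base phi sum of digits function. Consider the alphabet $\{0,1,2,\dots\}\times\{c_0,c_1,c_2,c_3\}$, writing letters as pairs $(j,c)$, and the morphism $\gamma$ defined for all $j\ge0$ by $\gamma((j,c_0))=(j,c_0)(j,c_1)$, $\gamma((j,c_1))=(j,c_2)(j,c_3)$, $\gamma((j,c_2))=(j+2,c_0)(j+2,c_1)(j+2,c_2)$, $\gamma((j,c_3))=(j+1,c_3)(j+2,c_2)(j+1,c_3)$. Let $x_\gamma=\lim_n\gamma^n((0,c_0))$ be the fixed point of $\gamma$ with initial letter $(0,c_0)$, and let $\delta$ be the morphism from this alphabet to words over the nonnegative integers given by $\delta((j,c_0))=(j,\,j+1)$, $\delta((j,c_1))=(j+2)$, $\delta((j,c_2))=(j+2,\,j+3)$, $\delta((j,c_3))=(j+3,\,j+3)$. Then $\delta(x_\gamma)$ equals the sequence $(s_\beta(N))_{N\ge0}$.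
   Context: Let $\varphi=(1+\sqrt5)/2$. Every natural number $N$ can be written uniquely (ignoring leading and trailing zeros) as a finite sum $N=\sum_{i=R}^{L}d_i\varphi^i$ with $i$ ranging over integers (possibly negative), digits $d_i\in\{0,1\}$, and no two consecutive digits $d_i,d_{i+1}$ both equal to $1$ (base phi expansion). The base phi sum of digits function $s_\beta(N)$ is the number of digits equal to $1$ in this expansion, with $s_\beta(0)=0$. The image of an infinite word under a morphism is the concatenation of the images of its letters. *)

From Stdlib Require Import Reals List ZArith Arith ClassicalEpsilon.
Import ListNotations.
Open Scope R_scope.

Definition phi : R := (1 + sqrt 5) / 2.

(** A base-phi expansion of N, given as the list S of (integer) positions i
    with digit d_i = 1: positions are distinct, no two consecutive positions
    both carry a 1, and N = sum_{i in S} phi^i. *)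
Definition phi_expansion (N : nat) (S : list Z) : Prop :=
  NoDup S /\
  (forall i, In i S -> ~ In (i + 1)%Z S) /\
  fold_right (fun i acc => powerRZ phi i + acc) 0 S = INR N.

(** s_beta(N): the number of digits 1 in the (unique) base-phi expansion of N.
    (Chosen by Hilbert epsilon; the expansion exists and is unique.) *)
Definition sbeta (N : nat) : nat :=
  epsilon (inhabits 0%nat)
    (fun k => exists S, phi_expansion N S /\ length S = k).

Inductive col : Type := c0 | c1 | c2 | c3.
Definition letter : Type := (nat * col)%type.

Definition gamma (a : letter) : list letter :=
  let (j, c) := a in
  match c with
  | c0 => [(j, c0); (j, c1)]
  | c1 => [(j, c2); (j, c3)]
  | c2 => [(j+2, c0); (j+2, c1); (j+2, c2)]
  | c3 => [(j+1, c3); (j+2, c2); (j+1, c3)]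
  end%nat.

Definition gamma_word (w : list letter) : list letter := flat_map gamma w.

Definition gamma_iter (n : nat) : list letter :=
  Nat.iter n gamma_word [(0%nat, c0)].

(** The fixed point x_gamma = lim_n gamma^n((0,c0)), as an infinite word
    nat -> letter: its i-th letter is the i-th letter of gamma^(i+1)((0,c0))
    (each gamma^n((0,c0)) is a prefix of gamma^(n+1)((0,c0)), and
    |gamma^(i+1)((0,c0))| >= 2^(i+1) > i). *)
Definition x_gamma (i : nat) : letter := nth i (gamma_iter (S i)) (0%nat, c0).

Definition delta (a : letter) : list nat :=
  let (j, c) := a in
  match c with
  | c0 => [j; j+1]
  | c1 => [j+2]
  | c2 => [j+2; j+3]
  | c3 => [j+3; j+3]
  end%nat.

(** Image of an infinite word under delta (delta is non-erasing, so the
    N-th letter of delta(x) lies within delta(x_0 ... x_N)). *)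
Definition delta_inf (x : nat -> letter) (N : nat) : nat :=
  nth N (flat_map delta (map x (seq 0 (S N)))) 0%nat.

(* The expansions are built explicitly on Lucas intervals.  Since
   L(2k) = phi^(2k) + phi^-(2k) and L(2k+1) = phi^(2k+1) - phi^-(2k+1), an expansion of
   L(2n+2) + k (k <= L(2n+1)) is one of k with the digits 2n+2 and -(2n+2) added, an
   expansion of L(2n+3) + k is one of k - phi^-(2n+2) with 2n+3 and -(2n+4) added, and the
   numbers m - phi^-(2n+2) expand likewise.  The digit count of an admissible expansion
   depends only on its value (its largest digit m is the one with phi^m <= x < phi^(m+1)),
   so this yields recurrences for s_beta on these intervals.  On the word side,
   delta(gamma^n((0,c))) for c = c0, c1, c2, c3 is s_beta on [0, L(2n)), s_beta on
   [L(2n), L(2n+2)), 2 + s_beta on [0, L(2n+1)], and 2 + the digit count of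
   m - phi^-(2n+2) for 0 < m < L(2n+2); applying gamma once more and the recurrences
   propagate these four descriptions from n to n+1, and x_gamma begins with every
   gamma^n((0,c0)). *)

From Stdlib Require Import Reals List ZArith Arith Lia Lra Permutation ClassicalEpsilon.
Import ListNotations.
Open Scope R_scope.

Lemma phi_sq : phi * phi = phi + 1.
Proof. unfold phi. pose proof (sqrt_sqrt 5 ltac:(lra)). nra. Qed.

Lemma phi_gt_1 : 1 < phi.
Proof.
  unfold phi. assert (1 < sqrt 5) by (rewrite <- sqrt_1; apply sqrt_lt_1; lra).
  lra.
Qed.

Lemma phi_neq_0 : phi <> 0.
Proof. pose proof phi_gt_1; lra. Qed.

Lemma powerRZ_phi_pos k : 0 < powerRZ phi k.
Proof. apply powerRZ_lt. pose proof phi_gt_1; lra. Qed.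

Lemma powerRZ_phi_le a b : (a <= b)%Z -> powerRZ phi a <= powerRZ phi b.
Proof.
  intros Hab. replace b with (a + Z.of_nat (Z.to_nat (b - a)))%Z by lia.
  rewrite powerRZ_add, <- pow_powerRZ by apply phi_neq_0.
  pose proof (pow_R1_Rle phi (Z.to_nat (b - a)) ltac:(pose proof phi_gt_1; lra)).
  pose proof (powerRZ_phi_pos a). nra.
Qed.

Lemma powerRZ_phi_rec k : powerRZ phi (k + 1) = powerRZ phi k + powerRZ phi (k - 1).
Proof.
  replace k with (k - 1 + 1)%Z at 2 by lia. replace (k + 1)%Z with (k - 1 + 2)%Z by lia.
  rewrite !powerRZ_add by apply phi_neq_0. simpl. rewrite Rmult_1_r, phi_sq. ring.
Qed.

Definition phi_sum (S : list Z) : R := fold_right (fun i acc => powerRZ phi i + acc) 0 S.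

Definition admissible (S : list Z) : Prop :=
  NoDup S /\ forall i, In i S -> ~ In (i + 1)%Z S.

Lemma phi_sum_cons i S : phi_sum (i :: S) = powerRZ phi i + phi_sum S.
Proof. reflexivity. Qed.

Lemma phi_sum_perm S T : Permutation S T -> phi_sum S = phi_sum T.
Proof. induction 1; rewrite ?phi_sum_cons; lra. Qed.

Lemma phi_sum_nonneg S : 0 <= phi_sum S.
Proof.
  induction S as [|i S IH]; [apply Rle_refl|].
  rewrite phi_sum_cons. pose proof (powerRZ_phi_pos i). lra.
Qed.

Lemma phi_sum_pos S : S <> [] -> 0 < phi_sum S.
Proof.
  destruct S as [|i S]; [congruence|]. intros _.
  rewrite phi_sum_cons. pose proof (powerRZ_phi_pos i). pose proof (phi_sum_nonneg S). lra.
Qed.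

Lemma admissible_perm S T : Permutation S T -> admissible S -> admissible T.
Proof.
  intros HST [Hnd Hgap]. split; [exact (Permutation_NoDup HST Hnd)|].
  intros i Hi Hi1. apply (Hgap i); apply (Permutation_in _ (Permutation_sym HST)); assumption.
Qed.

Lemma admissible_tail i S : admissible (i :: S) -> admissible S.
Proof.
  intros [Hnd Hgap]. split; [now inversion Hnd|].
  intros j Hj Hj1. apply (Hgap j); now right.
Qed.

Lemma Z_list_max S : S <> [] -> exists m, In m S /\ Forall (fun i => (i <= m)%Z) S.
Proof.
  induction S as [|a S IH]; [congruence|]. intros _.
  destruct S as [|b S].
  - exists a. split; [now left|]. constructor; [lia|constructor].
  - destruct IH as [m [Hm Hmax]]; [discriminate|].
    destruct (Z.le_gt_cases a m).
    + exists m. split; [now right|]. now constructor.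
    + exists a. split; [now left|]. constructor; [lia|].
      eapply Forall_impl; [|exact Hmax]. cbv beta. lia.
Qed.

Lemma admissible_max_split S : admissible S -> S <> [] ->
  exists m S', Permutation S (m :: S') /\ Forall (fun i => (i <= m - 2)%Z) S'.
Proof.
  intros Hadm Hne. destruct (Z_list_max S Hne) as [m [Hm Hmax]].
  destruct (in_split _ _ Hm) as [l1 [l2 ->]].
  pose proof (Permutation_sym (Permutation_middle l1 l2 m)) as Hperm.
  exists m, (l1 ++ l2). split; [exact Hperm|].
  destruct (admissible_perm _ _ Hperm Hadm) as [Hnd Hgap].
  apply Forall_forall. intros y Hy.
  assert (y <> m) by (intros ->; now inversion Hnd).
  assert (y + 1 <> m)%Z by (intros <-; apply (Hgap y); [now right|now left]).
  assert (y <= m)%Z.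
  { rewrite Forall_forall in Hmax. apply Hmax, (Permutation_in _ (Permutation_sym Hperm)).
    now right. }
  lia.
Qed.

Lemma phi_sum_lt_pow S m : admissible S ->
  Forall (fun i => (i <= m)%Z) S -> phi_sum S < powerRZ phi (m + 1).
Proof.
  remember (length S) as n eqn:Hlen. revert S m Hlen.
  induction n as [|n IH]; intros S m Hlen Hadm Hbound.
  - destruct S; [|discriminate]. apply powerRZ_phi_pos.
  - destruct (admissible_max_split S Hadm) as [m0 [S' [Hperm Hbound']]]; [now intros ->|].
    assert (Hm0 : (m0 <= m)%Z).
    { rewrite Forall_forall in Hbound.
      apply Hbound, (Permutation_in _ (Permutation_sym Hperm)). now left. }
    assert (HS' : phi_sum S' < powerRZ phi (m0 - 1)).
    { replace (m0 - 1)%Z with (m0 - 2 + 1)%Z by lia. apply IH; [| |exact Hbound'].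
      - apply Permutation_length in Hperm. simpl in Hperm. lia.
      - exact (admissible_tail _ _ (admissible_perm _ _ Hperm Hadm)). }
    rewrite (phi_sum_perm _ _ Hperm), phi_sum_cons.
    pose proof (powerRZ_phi_rec m0). pose proof (powerRZ_phi_le (m0 + 1) (m + 1) ltac:(lia)). lra.
Qed.

Lemma admissible_leading S : admissible S -> S <> [] ->
  exists m S', Permutation S (m :: S') /\ admissible S' /\
    powerRZ phi m <= phi_sum S < powerRZ phi (m + 1).
Proof.
  intros Hadm Hne. destruct (admissible_max_split S Hadm Hne) as [m [S' [Hperm Hbound]]].
  pose proof (admissible_tail _ _ (admissible_perm _ _ Hperm Hadm)) as Hadm'.
  exists m, S'. split; [exact Hperm|]. split; [exact Hadm'|].
  pose proof (phi_sum_lt_pow S' (m - 2) Hadm' Hbound).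
  pose proof (phi_sum_nonneg S'). pose proof (powerRZ_phi_rec m).
  replace (m - 2 + 1)%Z with (m - 1)%Z in * by lia.
  rewrite (phi_sum_perm _ _ Hperm), phi_sum_cons. lra.
Qed.

Lemma powerRZ_phi_interval_unique x m m' :
  powerRZ phi m <= x < powerRZ phi (m + 1) ->
  powerRZ phi m' <= x < powerRZ phi (m' + 1) -> m = m'.
Proof.
  intros Hm Hm'. destruct (Z.lt_trichotomy m m') as [Hlt|[Heq|Hlt]]; [exfalso| exact Heq |exfalso].
  - pose proof (powerRZ_phi_le (m + 1) m' ltac:(lia)). lra.
  - pose proof (powerRZ_phi_le (m' + 1) m ltac:(lia)). lra.
Qed.

Lemma admissible_length_unique S T :
  admissible S -> admissible T -> phi_sum S = phi_sum T -> length S = length T.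
Proof.
  remember (length S) as n eqn:Hlen. revert S T Hlen.
  induction n as [|n IH]; intros S T Hlen HS HT Hsum.
  - destruct S; [|discriminate]. destruct T as [|i T]; [reflexivity|].
    pose proof (phi_sum_pos (i :: T) ltac:(discriminate)) as Hpos.
    rewrite <- Hsum in Hpos. simpl in Hpos. lra.
  - assert (HSne : S <> []) by (intros ->; discriminate).
    assert (HTne : T <> []).
    { intros ->. pose proof (phi_sum_pos S HSne) as Hpos.
      rewrite Hsum in Hpos. simpl in Hpos. lra. }
    destruct (admissible_leading S HS HSne) as [m [S' [HpS [HS' HmS]]]].
    destruct (admissible_leading T HT HTne) as [m' [T' [HpT [HT' HmT]]]].
    assert (m' = m) as ->.
    { rewrite Hsum in HmS. exact (powerRZ_phi_interval_unique _ _ _ HmT HmS). }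
    assert (HlenS' : n = length S') by (apply Permutation_length in HpS; simpl in HpS; lia).
    rewrite (Permutation_length HpT). simpl. f_equal.
    apply (IH S' T' HlenS' HS' HT').
    rewrite (phi_sum_perm _ _ HpS), (phi_sum_perm _ _ HpT), !phi_sum_cons in Hsum. lra.
Qed.

Lemma sbeta_spec N S : admissible S -> phi_sum S = INR N -> sbeta N = length S.
Proof.
  intros Hadm Hsum. unfold sbeta.
  assert (Hex : exists k S', phi_expansion N S' /\ length S' = k).
  { exists (length S), S. destruct Hadm as [Hnd Hgap]. repeat split; assumption. }
  destruct (epsilon_spec (inhabits 0%nat) _ Hex) as [S' [[Hnd [Hgap Hsum']] <-]].
  symmetry. apply (admissible_length_unique S S' Hadm); [split; assumption|].
  rewrite Hsum. exact (eq_sym Hsum').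
Qed.

Fixpoint lucas (n : nat) : nat :=
  match n with
  | O => 2
  | S O => 1
  | S (S k as m) => lucas m + lucas k
  end.

Lemma lucas_SS k : lucas (S (S k)) = (lucas (S k) + lucas k)%nat.
Proof. reflexivity. Qed.

Lemma lucas_ge k : (k <= lucas k)%nat.
Proof.
  enough (H : forall k, (k <= lucas k /\ S k <= lucas (S k))%nat) by apply H.
  intros k'. induction k' as [|k' [IH1 IH2]]; [simpl; lia|].
  split; [lia|]. rewrite lucas_SS. destruct k'; simpl in *; lia.
Qed.

Lemma lucas_binet k : INR (lucas k) = phi ^ k + (1 - phi) ^ k.
Proof.
  enough (H : forall k, INR (lucas k) = phi ^ k + (1 - phi) ^ k /\
                        INR (lucas (S k)) = phi ^ S k + (1 - phi) ^ S k) by apply H.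
  intros k'. induction k' as [|k' [IH1 IH2]]; [simpl; split; lra|].
  split; [exact IH2|].
  rewrite lucas_SS, plus_INR, IH1, IH2. pose proof phi_sq. simpl.
  replace (phi * (phi * phi ^ k')) with (phi * phi * phi ^ k') by ring.
  replace ((1 - phi) * ((1 - phi) * (1 - phi) ^ k'))
    with ((1 - phi) * (1 - phi) * (1 - phi) ^ k') by ring.
  replace ((1 - phi) * (1 - phi)) with (1 - phi + 1) by nra.
  rewrite H. ring.
Qed.

Lemma inv_phi : / phi = phi - 1.
Proof. symmetry. apply Rmult_inv_r_uniq; [exact phi_neq_0|]. pose proof phi_sq. nra. Qed.

Lemma lucas_binet_sign k : INR (lucas k) = phi ^ k + (-1) ^ k * / phi ^ k.
Proof.
  rewrite lucas_binet, <- pow_inv, <- Rpow_mult_distr. f_equal. f_equal. rewrite inv_phi. ring.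
Qed.

Lemma lucas_even_succ n : INR (lucas (2 * n + 2)) = phi ^ (2 * n + 2) + / phi ^ (2 * n + 2).
Proof.
  rewrite lucas_binet_sign. replace (2 * n + 2)%nat with (2 * S n)%nat by lia.
  rewrite pow_1_even. ring.
Qed.

Lemma lucas_odd_succ n : INR (lucas (2 * n + 3)) = phi ^ (2 * n + 3) - / phi ^ (2 * n + 3).
Proof.
  rewrite lucas_binet_sign. replace (2 * n + 3)%nat with (S (2 * S n))%nat by lia.
  rewrite pow_1_odd. ring.
Qed.

Lemma lucas_pos k : (1 <= lucas k)%nat.
Proof. destruct k as [|[|k]]; [simpl; lia..|]. pose proof (lucas_ge (S (S k))). lia. Qed.

Lemma lucas_level n :
  lucas (2 * n + 2) = (lucas (2 * n + 1) + lucas (2 * n))%nat /\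
  lucas (2 * n + 3) = (lucas (2 * n + 2) + lucas (2 * n + 1))%nat /\
  lucas (2 * n + 4) = (lucas (2 * n + 3) + lucas (2 * n + 2))%nat.
Proof.
  repeat split; match goal with
  | |- lucas ?a = (lucas ?b + lucas ?c)%nat =>
      replace a with (S (S c)) by lia; replace b with (S c) by lia; reflexivity
  end.
Qed.

Lemma lucas_succ_level n :
  lucas (2 * S n + 2) = (lucas (2 * n + 3) + lucas (2 * n + 2))%nat.
Proof. replace (2 * S n + 2)%nat with (2 * n + 4)%nat by lia. apply lucas_level. Qed.

Lemma lucas_interval_cases n N :
  (N < lucas (2 * n + 2))%nat \/
  (exists k, N = (lucas (2 * n + 2) + k)%nat /\ (k <= lucas (2 * n + 1))%nat) \/
  (exists k, N = (lucas (2 * n + 3) + k)%nat /\ (0 < k)%nat).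
Proof.
  destruct (lucas_level n) as [_ [H3 _]].
  destruct (Nat.lt_ge_cases N (lucas (2 * n + 2))) as [Hlo|Hlo]; [now left|right].
  destruct (Nat.le_gt_cases N (lucas (2 * n + 3))) as [Hmid|Hhi].
  - left. exists (N - lucas (2 * n + 2))%nat. lia.
  - right. exists (N - lucas (2 * n + 3))%nat. lia.
Qed.

(* For N < lucas (2n+2), [digits n N] is an admissible base-phi expansion of N; for
   0 < m < lucas (2n+2), [digits_minus n m] is one of m - phi^-(2n+2). *)
Fixpoint digits (n N : nat) {struct n} : list Z :=
  match n with
  | O => match N with O => [] | 1 => [0%Z] | _ => [1%Z; (-2)%Z] end
  | S k =>
      if N <? lucas (2 * k + 2) then digits k N
      else if N <=? lucas (2 * k + 3) then
        Z.of_nat (2 * k + 2) :: (- Z.of_nat (2 * k + 2))%Z :: digits k (N - lucas (2 * k + 2))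
      else
        Z.of_nat (2 * k + 3) :: (- Z.of_nat (2 * k + 4))%Z
          :: digits_minus k (N - lucas (2 * k + 3))
  end
with digits_minus (n m : nat) {struct n} : list Z :=
  match n with
  | O => if m =? 1 then [(-1)%Z] else [1%Z]
  | S k =>
      if m <? lucas (2 * k + 2) then (- Z.of_nat (2 * k + 3))%Z :: digits_minus k m
      else if m <=? lucas (2 * k + 3) then
        Z.of_nat (2 * k + 2) :: (- Z.of_nat (2 * k + 3))%Z :: digits k (m - lucas (2 * k + 2))
      else
        Z.of_nat (2 * k + 3) :: digits_minus k (m - lucas (2 * k + 3))
  end.

Section DigitsBranches.
Variables n k : nat.

Lemma digits_succ_low : (k < lucas (2 * n + 2))%nat -> digits (S n) k = digits n k.
Proof.
  intros H. cbn [digits digits_minus].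
  destruct (Nat.ltb_spec k (lucas (2 * n + 2))); [reflexivity|lia].
Qed.

Lemma digits_succ_mid : (k <= lucas (2 * n + 1))%nat ->
  digits (S n) (lucas (2 * n + 2) + k) =
  Z.of_nat (2 * n + 2) :: (- Z.of_nat (2 * n + 2))%Z :: digits n k.
Proof.
  intros H. destruct (lucas_level n) as [_ [H3 _]]. cbn [digits digits_minus].
  destruct (Nat.ltb_spec (lucas (2 * n + 2) + k) (lucas (2 * n + 2))); [lia|].
  destruct (Nat.leb_spec (lucas (2 * n + 2) + k) (lucas (2 * n + 3))); [|lia].
  do 3 f_equal. lia.
Qed.

Lemma digits_succ_high : (0 < k)%nat ->
  digits (S n) (lucas (2 * n + 3) + k) =
  Z.of_nat (2 * n + 3) :: (- Z.of_nat (2 * n + 4))%Z :: digits_minus n k.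
Proof.
  intros H. destruct (lucas_level n) as [_ [H3 _]]. cbn [digits digits_minus].
  destruct (Nat.ltb_spec (lucas (2 * n + 3) + k) (lucas (2 * n + 2))); [lia|].
  destruct (Nat.leb_spec (lucas (2 * n + 3) + k) (lucas (2 * n + 3))); [lia|].
  do 3 f_equal. lia.
Qed.

Lemma digits_minus_succ_low : (k < lucas (2 * n + 2))%nat ->
  digits_minus (S n) k = (- Z.of_nat (2 * n + 3))%Z :: digits_minus n k.
Proof.
  intros H. cbn [digits digits_minus].
  destruct (Nat.ltb_spec k (lucas (2 * n + 2))); [reflexivity|lia].
Qed.

Lemma digits_minus_succ_mid : (k <= lucas (2 * n + 1))%nat ->
  digits_minus (S n) (lucas (2 * n + 2) + k) =
  Z.of_nat (2 * n + 2) :: (- Z.of_nat (2 * n + 3))%Z :: digits n k.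
Proof.
  intros H. destruct (lucas_level n) as [_ [H3 _]]. cbn [digits digits_minus].
  destruct (Nat.ltb_spec (lucas (2 * n + 2) + k) (lucas (2 * n + 2))); [lia|].
  destruct (Nat.leb_spec (lucas (2 * n + 2) + k) (lucas (2 * n + 3))); [|lia].
  do 3 f_equal. lia.
Qed.

Lemma digits_minus_succ_high : (0 < k)%nat ->
  digits_minus (S n) (lucas (2 * n + 3) + k) = Z.of_nat (2 * n + 3) :: digits_minus n k.
Proof.
  intros H. destruct (lucas_level n) as [_ [H3 _]]. cbn [digits digits_minus].
  destruct (Nat.ltb_spec (lucas (2 * n + 3) + k) (lucas (2 * n + 2))); [lia|].
  destruct (Nat.leb_spec (lucas (2 * n + 3) + k) (lucas (2 * n + 3))); [lia|].
  do 2 f_equal. lia.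
Qed.

End DigitsBranches.

Definition expands (x : R) (lo hi : Z) (S : list Z) : Prop :=
  admissible S /\ phi_sum S = x /\ Forall (fun i => (lo <= i <= hi)%Z) S.

Lemma expands_weaken x lo hi lo' hi' S : expands x lo hi S ->
  (lo' <= lo)%Z -> (hi <= hi')%Z -> expands x lo' hi' S.
Proof.
  intros [Hadm [Hsum Hb]] Hlo Hhi. split; [exact Hadm|]. split; [exact Hsum|].
  eapply Forall_impl; [|exact Hb]. cbv beta. lia.
Qed.

Lemma expands_cons a S x y lo hi lo' hi' : expands x lo hi S ->
  y = powerRZ phi a + x -> (a + 2 <= lo \/ hi + 2 <= a)%Z ->
  (lo' <= Z.min a lo)%Z -> (Z.max a hi <= hi')%Z -> expands y lo' hi' (a :: S).
Proof.
  intros [[Hnd Hgap] [Hsum Hb]] -> Hfar Hlo Hhi. rewrite Forall_forall in Hb.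
  assert (Hsep : forall i, In i S -> (a + 2 <= i \/ i + 2 <= a)%Z)
    by (intros i Hi; specialize (Hb i Hi); lia).
  split; [split|split].
  - constructor; [|exact Hnd]. intros Ha. specialize (Hsep a Ha). lia.
  - intros i [<-|Hi] [Hi1|Hi1].
    + lia.
    + specialize (Hsep _ Hi1). lia.
    + specialize (Hsep _ Hi). lia.
    + exact (Hgap i Hi Hi1).
  - rewrite phi_sum_cons, Hsum. reflexivity.
  - constructor; [lia|]. apply Forall_forall. intros i Hi. specialize (Hb i Hi). lia.
Qed.

Lemma expands_cons2 a b S x y lo hi : expands x lo hi S ->
  y = powerRZ phi a + powerRZ phi b + x ->
  (b + 2 <= lo)%Z -> (lo <= hi)%Z -> (hi + 2 <= a)%Z -> expands y b a (a :: b :: S).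
Proof.
  intros HS -> Hb Hlohi Ha. rewrite Rplus_assoc.
  apply (expands_cons a (b :: S) (powerRZ phi b + x) _ b hi); [|reflexivity|lia|lia|lia].
  apply (expands_cons b S x _ lo hi); [exact HS|reflexivity|lia|lia|lia].
Qed.

Lemma inv_pow_phi_level n : / phi ^ (2 * n + 2) = / phi ^ (2 * n + 3) + / phi ^ (2 * n + 4).
Proof.
  replace (2 * n + 4)%nat with (S (S (2 * n + 2))) by lia.
  replace (2 * n + 3)%nat with (S (2 * n + 2)) by lia.
  pose proof (pow_nonzero phi (2 * n + 2) phi_neq_0). pose proof phi_neq_0.
  cbn [pow]. set (p := phi ^ (2 * n + 2)) in *.
  replace (/ p) with ((phi * phi) / (phi * (phi * p))) by (field; auto).
  rewrite phi_sq. field. auto.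
Qed.

(* The tighter bounds for N <= lucas (2n+1) leave room for the digits 2n+2 and -(2n+2)
   added at the next level. *)
Definition digits_spec (n : nat) : Prop :=
  (forall N, (N < lucas (2 * n + 2))%nat ->
     expands (INR N) (- Z.of_nat (2 * n + 2)) (Z.of_nat (2 * n + 1)) (digits n N)) /\
  (forall N, (N <= lucas (2 * n + 1))%nat ->
     expands (INR N) (- Z.of_nat (2 * n)) (Z.of_nat (2 * n)) (digits n N)) /\
  (forall m, (0 < m < lucas (2 * n + 2))%nat ->
     expands (INR m - / phi ^ (2 * n + 2)) (- Z.of_nat (2 * n + 1)) (Z.of_nat (2 * n + 1))
       (digits_minus n m)).

Lemma digits_spec_0 : digits_spec 0.
Proof.
  assert (Hinv2 : / (phi * phi) = 2 - phi).
  { rewrite Rinv_mult, inv_phi. pose proof phi_sq. nra. }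
  unfold digits_spec; simpl; split; [|split]; intros N HN;
    [destruct N as [|[|[|]]] | destruct N as [|[|]] | destruct N as [|[|[|]]]];
    try lia; simpl;
    (split; [split; [repeat constructor; simpl; lia | simpl; intros; lia]
            | split; [simpl | repeat constructor; lia]]);
    rewrite ?Rmult_1_r, ?Hinv2, ?inv_phi; lra.
Qed.

Ltac phi_sum_arith n :=
  rewrite ?plus_INR, ?lucas_even_succ, ?lucas_odd_succ, ?powerRZ_neg', <- ?pow_powerRZ;
  pose proof (inv_pow_phi_level n); lra.

Section DigitsStep.
Variable n : nat.
Hypothesis digits_ok : forall N, (N < lucas (2 * n + 2))%nat ->
  expands (INR N) (- Z.of_nat (2 * n + 2)) (Z.of_nat (2 * n + 1)) (digits n N).
Hypothesis digits_ok_small : forall N, (N <= lucas (2 * n + 1))%nat ->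
  expands (INR N) (- Z.of_nat (2 * n)) (Z.of_nat (2 * n)) (digits n N).
Hypothesis digits_minus_ok : forall m, (0 < m < lucas (2 * n + 2))%nat ->
  expands (INR m - / phi ^ (2 * n + 2)) (- Z.of_nat (2 * n + 1)) (Z.of_nat (2 * n + 1))
    (digits_minus n m).

Lemma digits_succ_ok_small N : (N <= lucas (2 * n + 3))%nat ->
  expands (INR N) (- Z.of_nat (2 * n + 2)) (Z.of_nat (2 * n + 2)) (digits (S n) N).
Proof.
  intros HN.
  destruct (lucas_interval_cases n N) as [Hlo|[[k [-> Hk]]|[k [-> Hk]]]]; [| |lia].
  - rewrite digits_succ_low by exact Hlo.
    apply (expands_weaken _ _ _ _ _ _ (digits_ok N Hlo)); lia.
  - rewrite digits_succ_mid by exact Hk.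
    apply (expands_cons2 _ _ _ _ _ _ _ (digits_ok_small k Hk)); [phi_sum_arith n|lia..].
Qed.

Lemma digits_succ_ok N : (N < lucas (2 * n + 4))%nat ->
  expands (INR N) (- Z.of_nat (2 * n + 4)) (Z.of_nat (2 * n + 3)) (digits (S n) N).
Proof.
  intros HN. destruct (lucas_level n) as [_ [H3 H4]].
  destruct (Nat.le_gt_cases N (lucas (2 * n + 3))) as [Hsmall|Hbig].
  - apply (expands_weaken _ _ _ _ _ _ (digits_succ_ok_small N Hsmall)); lia.
  - destruct (lucas_interval_cases n N) as [Hlo|[[k [-> Hk]]|[k [-> Hk]]]]; [lia|lia|].
    rewrite digits_succ_high by exact Hk.
    apply (expands_cons2 _ _ _ _ _ _ _ (digits_minus_ok k ltac:(lia))); [phi_sum_arith n|lia..].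
Qed.

Lemma digits_minus_succ_ok m : (0 < m < lucas (2 * n + 4))%nat ->
  expands (INR m - / phi ^ (2 * n + 4)) (- Z.of_nat (2 * n + 3)) (Z.of_nat (2 * n + 3))
    (digits_minus (S n) m).
Proof.
  intros Hm. destruct (lucas_level n) as [_ [_ H4]].
  destruct (lucas_interval_cases n m) as [Hlo|[[k [-> Hk]]|[k [-> Hk]]]].
  - rewrite digits_minus_succ_low by exact Hlo.
    apply (expands_cons _ _ _ _ _ _ _ _ (digits_minus_ok m ltac:(lia))); [phi_sum_arith n|lia..].
  - rewrite digits_minus_succ_mid by exact Hk.
    apply (expands_weaken (INR (lucas (2 * n + 2) + k) - / phi ^ (2 * n + 4))
             (- Z.of_nat (2 * n + 3)) (Z.of_nat (2 * n + 2))); [|lia|lia].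
    apply (expands_cons2 _ _ _ _ _ _ _ (digits_ok_small k Hk)); [phi_sum_arith n|lia..].
  - rewrite digits_minus_succ_high by exact Hk.
    apply (expands_cons _ _ _ _ _ _ _ _ (digits_minus_ok k ltac:(lia))); [phi_sum_arith n|lia..].
Qed.

End DigitsStep.

Lemma digits_correct n : digits_spec n.
Proof.
  induction n as [|n [IH1 [IH2 IH3]]]; [exact digits_spec_0|]. unfold digits_spec.
  replace (2 * S n + 2)%nat with (2 * n + 4)%nat by lia.
  replace (2 * S n + 1)%nat with (2 * n + 3)%nat by lia.
  replace (2 * S n)%nat with (2 * n + 2)%nat by lia.
  split; [|split].
  - exact (digits_succ_ok n IH1 IH2 IH3).
  - exact (digits_succ_ok_small n IH1 IH2).
  - exact (digits_minus_succ_ok n IH2 IH3).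
Qed.

Lemma sbeta_digits n N : (N < lucas (2 * n + 2))%nat -> sbeta N = length (digits n N).
Proof.
  intros HN. destruct (proj1 (digits_correct n) N HN) as [Hadm [Hsum _]].
  exact (sbeta_spec N _ Hadm Hsum).
Qed.

Definition sbeta_minus (n m : nat) : nat := length (digits_minus n m).

Section DigitCountRecurrences.
Variables n k : nat.

Lemma sbeta_lucas_even : (k <= lucas (2 * n + 1))%nat ->
  sbeta (lucas (2 * n + 2) + k) = (2 + sbeta k)%nat.
Proof.
  intros Hk. destruct (lucas_level n) as [H2 [H3 _]]. pose proof (lucas_succ_level n).
  pose proof (lucas_pos (2 * n)).
  rewrite (sbeta_digits (S n)), digits_succ_mid, (sbeta_digits n k) by lia. reflexivity.
Qed.

Lemma sbeta_lucas_odd : (0 < k < lucas (2 * n + 2))%nat ->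
  sbeta (lucas (2 * n + 3) + k) = (2 + sbeta_minus n k)%nat.
Proof.
  intros Hk. pose proof (lucas_succ_level n).
  rewrite (sbeta_digits (S n)), digits_succ_high by lia. reflexivity.
Qed.

Lemma sbeta_minus_succ_low : (k < lucas (2 * n + 2))%nat ->
  sbeta_minus (S n) k = (1 + sbeta_minus n k)%nat.
Proof. intros Hk. unfold sbeta_minus. rewrite digits_minus_succ_low by exact Hk. reflexivity. Qed.

Lemma sbeta_minus_succ_mid : (k <= lucas (2 * n + 1))%nat ->
  sbeta_minus (S n) (lucas (2 * n + 2) + k) = (2 + sbeta k)%nat.
Proof.
  intros Hk. destruct (lucas_level n) as [H2 _]. pose proof (lucas_pos (2 * n)).
  unfold sbeta_minus. rewrite digits_minus_succ_mid, (sbeta_digits n k) by lia. reflexivity.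
Qed.

Lemma sbeta_minus_succ_high : (0 < k)%nat ->
  sbeta_minus (S n) (lucas (2 * n + 3) + k) = (1 + sbeta_minus n k)%nat.
Proof. intros Hk. unfold sbeta_minus. rewrite digits_minus_succ_high by exact Hk. reflexivity. Qed.

End DigitCountRecurrences.

Close Scope R_scope.
Open Scope nat_scope.

Definition shift_letter (j : nat) (a : letter) : letter := (j + fst a, snd a).

Definition block (n : nat) (c : col) : list nat :=
  flat_map delta (Nat.iter n gamma_word [(0, c)]).

Lemma gamma_shift j a : gamma (shift_letter j a) = map (shift_letter j) (gamma a).
Proof. destruct a as [i []]; unfold shift_letter; simpl; rewrite ?Nat.add_assoc; reflexivity. Qed.

Lemma delta_shift j a : delta (shift_letter j a) = map (Nat.add j) (delta a).
Proof. destruct a as [i []]; unfold shift_letter; simpl; rewrite ?Nat.add_assoc; reflexivity. Qed.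

Lemma iter_gamma_word_app n u v :
  Nat.iter n gamma_word (u ++ v) = Nat.iter n gamma_word u ++ Nat.iter n gamma_word v.
Proof. induction n as [|n IH]; [reflexivity|]. simpl. rewrite IH. apply flat_map_app. Qed.

Lemma gamma_word_shift j w :
  gamma_word (map (shift_letter j) w) = map (shift_letter j) (gamma_word w).
Proof.
  induction w as [|a w IH]; [reflexivity|].
  unfold gamma_word in *. cbn [flat_map map]. rewrite gamma_shift, IH, map_app. reflexivity.
Qed.

Lemma iter_gamma_word_shift n j w :
  Nat.iter n gamma_word (map (shift_letter j) w) = map (shift_letter j) (Nat.iter n gamma_word w).
Proof. induction n as [|n IH]; [reflexivity|]. simpl. rewrite IH. apply gamma_word_shift. Qed.

Lemma flat_map_delta_shift j w :
  flat_map delta (map (shift_letter j) w) = map (Nat.add j) (flat_map delta w).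
Proof.
  induction w as [|a w IH]; [reflexivity|].
  cbn [flat_map map]. rewrite delta_shift, IH, map_app. reflexivity.
Qed.

Lemma flat_map_delta_iter n w :
  flat_map delta (Nat.iter n gamma_word w) =
  flat_map (fun a => map (Nat.add (fst a)) (block n (snd a))) w.
Proof.
  induction w as [|[j c] w IH].
  { assert (Hnil : Nat.iter n gamma_word [] = [])
      by (induction n as [|n IHn]; [|simpl; rewrite IHn]; reflexivity).
    rewrite Hnil. reflexivity. }
  change ((j, c) :: w) with ([(j, c)] ++ w).
  rewrite iter_gamma_word_app, flat_map_app, IH. simpl. f_equal.
  replace [(j, c)] with (map (shift_letter j) [(0, c)])
    by (unfold shift_letter; simpl; rewrite Nat.add_0_r; reflexivity).
  rewrite iter_gamma_word_shift, flat_map_delta_shift. reflexivity.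
Qed.

Lemma block_succ n c :
  block (S n) c = flat_map (fun a => map (Nat.add (fst a)) (block n (snd a))) (gamma (0, c)).
Proof.
  unfold block at 1. rewrite Nat.iter_succ_r, flat_map_delta_iter.
  unfold gamma_word. cbn [flat_map]. rewrite app_nil_r. reflexivity.
Qed.

Lemma map_seq_shift (f g : nat -> nat) s s' len :
  (forall i, i < len -> f (s + i) = g (s' + i)) -> map f (seq s len) = map g (seq s' len).
Proof.
  revert s s'. induction len as [|len IH]; intros s s' H; [reflexivity|]. simpl. f_equal.
  - rewrite <- (Nat.add_0_r s), <- (Nat.add_0_r s'). apply H. lia.
  - apply IH. intros i Hi.
    replace (S s + i) with (s + S i) by lia. replace (S s' + i) with (s' + S i) by lia.
    apply H. lia.
Qed.

Section BlockStep.
Variable n : nat.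
Hypothesis block_c0 : block n c0 = map sbeta (seq 0 (lucas (2 * n))).
Hypothesis block_c1 : block n c1 = map sbeta (seq (lucas (2 * n)) (lucas (2 * n + 1))).
Hypothesis block_c2 : block n c2 = map (fun k => 2 + sbeta k) (seq 0 (lucas (2 * n + 1) + 1)).
Hypothesis block_c3 :
  block n c3 = map (fun m => 2 + sbeta_minus n m) (seq 1 (lucas (2 * n + 2) - 1)).

Lemma block_succ_c0 : block (S n) c0 = map sbeta (seq 0 (lucas (2 * n + 2))).
Proof.
  destruct (lucas_level n) as [H2 _].
  rewrite block_succ. cbn [gamma flat_map fst snd app Nat.add].
  rewrite block_c0, block_c1, app_nil_r, !map_map.
  replace (lucas (2 * n + 2)) with (lucas (2 * n) + lucas (2 * n + 1)) by lia.
  rewrite seq_app, map_app. apply f_equal2; apply map_seq_shift; intros i _; reflexivity.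
Qed.

Lemma block_succ_c1 :
  block (S n) c1 = map sbeta (seq (lucas (2 * n + 2)) (lucas (2 * n + 3))).
Proof.
  destruct (lucas_level n) as [H2 [H3 _]]. pose proof (lucas_pos (2 * n)).
  rewrite block_succ. cbn [gamma flat_map fst snd app Nat.add].
  rewrite block_c2, block_c3, app_nil_r, !map_map.
  replace (lucas (2 * n + 3)) with (lucas (2 * n + 1) + 1 + (lucas (2 * n + 2) - 1)) by lia.
  rewrite (seq_app (lucas (2 * n + 1) + 1)), map_app.
  apply f_equal2; apply map_seq_shift; intros i Hi.
  - rewrite sbeta_lucas_even by lia. reflexivity.
  - replace (lucas (2 * n + 2) + (lucas (2 * n + 1) + 1) + i)
      with (lucas (2 * n + 3) + (1 + i)) by lia.
    rewrite sbeta_lucas_odd by lia. reflexivity.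
Qed.

Lemma block_succ_c2 :
  block (S n) c2 = map (fun k => 2 + sbeta k) (seq 0 (lucas (2 * n + 3) + 1)).
Proof.
  destruct (lucas_level n) as [H2 [H3 _]].
  rewrite block_succ. cbn [gamma flat_map fst snd app Nat.add].
  rewrite block_c0, block_c1, block_c2, app_nil_r, !map_map.
  replace (lucas (2 * n + 3) + 1)
    with (lucas (2 * n) + (lucas (2 * n + 1) + (lucas (2 * n + 1) + 1))) by lia.
  rewrite (seq_app (lucas (2 * n))), (seq_app (lucas (2 * n + 1)) (lucas (2 * n + 1) + 1)).
  rewrite !map_app.
  apply f_equal2; [|apply f_equal2]; apply map_seq_shift; intros i Hi; try reflexivity.
  replace (0 + lucas (2 * n) + lucas (2 * n + 1) + i) with (lucas (2 * n + 2) + (0 + i)) by lia.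
  rewrite sbeta_lucas_even by lia. reflexivity.
Qed.

Lemma block_succ_c3 :
  block (S n) c3 = map (fun m => 2 + sbeta_minus (S n) m) (seq 1 (lucas (2 * n + 4) - 1)).
Proof.
  destruct (lucas_level n) as [H2 [H3 H4]]. pose proof (lucas_pos (2 * n)).
  rewrite block_succ. cbn [gamma flat_map fst snd app Nat.add].
  rewrite block_c2, block_c3, app_nil_r, !map_map.
  replace (lucas (2 * n + 4) - 1)
    with (lucas (2 * n + 2) - 1 + (lucas (2 * n + 1) + 1 + (lucas (2 * n + 2) - 1))) by lia.
  rewrite (seq_app (lucas (2 * n + 2) - 1)).
  rewrite (seq_app (lucas (2 * n + 1) + 1) (lucas (2 * n + 2) - 1)), !map_app.
  apply f_equal2; [|apply f_equal2]; apply map_seq_shift; intros i Hi.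
  - rewrite sbeta_minus_succ_low by lia. reflexivity.
  - replace (1 + (lucas (2 * n + 2) - 1) + i) with (lucas (2 * n + 2) + (0 + i)) by lia.
    rewrite sbeta_minus_succ_mid by lia. reflexivity.
  - replace (1 + (lucas (2 * n + 2) - 1) + (lucas (2 * n + 1) + 1) + i)
      with (lucas (2 * n + 3) + (1 + i)) by lia.
    rewrite sbeta_minus_succ_high by lia. reflexivity.
Qed.

End BlockStep.

Lemma block_counts n :
  block n c0 = map sbeta (seq 0 (lucas (2 * n))) /\
  block n c1 = map sbeta (seq (lucas (2 * n)) (lucas (2 * n + 1))) /\
  block n c2 = map (fun k => 2 + sbeta k) (seq 0 (lucas (2 * n + 1) + 1)) /\
  block n c3 = map (fun m => 2 + sbeta_minus n m) (seq 1 (lucas (2 * n + 2) - 1)).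
Proof.
  induction n as [|n [H0 [H1 [H2 H3]]]].
  - repeat split; simpl; rewrite ?(sbeta_digits 0) by (simpl; lia); reflexivity.
  - replace (2 * S n + 2) with (2 * n + 4) by lia.
    replace (2 * S n + 1) with (2 * n + 3) by lia.
    replace (2 * S n) with (2 * n + 2) by lia.
    split; [|split; [|split]].
    + exact (block_succ_c0 n H0 H1).
    + exact (block_succ_c1 n H2 H3).
    + exact (block_succ_c2 n H0 H1 H2).
    + exact (block_succ_c3 n H2 H3).
Qed.

Lemma gamma_word_length w : length w <= length (gamma_word w).
Proof.
  induction w as [|[i c] w IH]; [reflexivity|].
  unfold gamma_word in *. cbn [flat_map]. rewrite length_app.
  destruct c; simpl; lia.
Qed.

Lemma iter_gamma_word_length n w : length w <= length (Nat.iter n gamma_word w).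
Proof.
  induction n as [|n IH]; [reflexivity|]. simpl.
  pose proof (gamma_word_length (Nat.iter n gamma_word w)). lia.
Qed.

Lemma gamma_iter_succ n : gamma_iter (S n) = gamma_iter n ++ Nat.iter n gamma_word [(0, c1)].
Proof.
  unfold gamma_iter. rewrite Nat.iter_succ_r.
  change (gamma_word [(0, c0)]) with ([(0, c0)] ++ [(0, c1)]). apply iter_gamma_word_app.
Qed.

Lemma gamma_iter_length n : n < length (gamma_iter n).
Proof.
  induction n as [|n IH]; [simpl; lia|].
  rewrite gamma_iter_succ, length_app.
  pose proof (iter_gamma_word_length n [(0, c1)]). simpl in *. lia.
Qed.

Lemma gamma_iter_prefix n k : exists r, gamma_iter (n + k) = gamma_iter n ++ r.
Proof.
  induction k as [|k [r Hr]]; [exists []; rewrite Nat.add_0_r, app_nil_r; reflexivity|].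
  exists (r ++ Nat.iter (n + k) gamma_word [(0, c1)]).
  rewrite Nat.add_succ_r, gamma_iter_succ, Hr, app_assoc. reflexivity.
Qed.

Lemma x_gamma_nth i M : i < M -> x_gamma i = nth i (gamma_iter M) (0, c0).
Proof.
  intros HiM. destruct (gamma_iter_prefix (S i) (M - S i)) as [r Hr].
  replace (S i + (M - S i)) with M in Hr by lia.
  rewrite Hr, app_nth1 by (pose proof (gamma_iter_length (S i)); lia). reflexivity.
Qed.

Lemma flat_map_delta_length w : length w <= length (flat_map delta w).
Proof.
  induction w as [|[i c] w IH]; [reflexivity|].
  cbn [flat_map]. rewrite length_app. destruct c; simpl; lia.
Qed.

Lemma nth_map_seq {A} (f : nat -> A) N len d : N < len -> nth N (map f (seq 0 len)) d = f N.
Proof.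
  intros HN. rewrite (nth_indep _ d (f 0)) by (rewrite length_map, length_seq; exact HN).
  rewrite map_nth, seq_nth by exact HN. reflexivity.
Qed.

Lemma delta_inf_prefix (x : nat -> letter) (w : list letter) N :
  (forall i, i <= N -> x i = nth i w (0, c0)) -> N < length w ->
  delta_inf x N = nth N (flat_map delta w) 0.
Proof.
  intros Hx HN. unfold delta_inf.
  assert (Hpre : map x (seq 0 (S N)) = firstn (S N) w).
  { apply (nth_ext _ _ (0, c0) (0, c0)); [rewrite length_map, length_seq, length_firstn; lia|].
    intros i Hi. rewrite length_map, length_seq in Hi.
    rewrite nth_map_seq, nth_firstn by exact Hi.
    destruct (Nat.ltb_spec i (S N)); [apply Hx; lia|lia]. }
  rewrite Hpre. rewrite <- (firstn_skipn (S N) w) at 2.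
  rewrite flat_map_app, app_nth1; [reflexivity|].
  pose proof (flat_map_delta_length (firstn (S N) w)). rewrite length_firstn in *. lia.
Qed.

Theorem theorem5 : forall N : nat, delta_inf x_gamma N = sbeta N.
Proof.
  intros N.
  rewrite (delta_inf_prefix x_gamma (gamma_iter (S N))).
  - change (flat_map delta (gamma_iter (S N))) with (block (S N) c0).
    rewrite (proj1 (block_counts (S N))). apply nth_map_seq.
    pose proof (lucas_ge (2 * S N)). lia.
  - intros i Hi. apply x_gamma_nth. lia.
  - pose proof (gamma_iter_length (S N)). lia.
Qed.
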